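(* Let $f$ be a finitary Boolean function. Then for every $k\in\mathbb N$, $I_k(B_nf)\to I_k(f)$ as $n\to\infty$. If moreover $f$ is $p$-knowable for some $p>\tfrac12$, then $H(B_nf)\to H(f)$; and if $f$ is $p$-knowable for some $p>1$, then $I(B_nf)\to I(f)$.
   Context: Let $\Omega=\{-1,1\}$ and $\Omega^\infty=\{-1,1\}^{\mathbb N}$ with the uniform product probability measure; $\omega$ denotes a uniformly random element. A Boolean function is a measurable map $f:\Omega^\infty\to\Omega$. $\omega^{(k)}$ is $\omega$ with bit $k$ flipped; $I_k(f)=\mathbb P(f(\omega^{(k)})\ne f(\omega))$, $I(f)=\sum_kI_k(f)$, $H(f)=\sum_kI_k(f)^2$. A set $W\subseteq\mathbb N$ is a witness set for $f$ at $\omega$ if there is an event $A$ with $\mathbb P(A)=1$ such that for all $\tilde\omega\in A$: if $\tilde\omega_i=\omega_i$ for all $i\in W$ then $f(\tilde\omega)=f(\omega)$. $f$ is finitary if almost surely a finite witness set exists; then $W(f)(\omega)$ denotes the least finite witness set in the order: smaller maximum first, then smaller cardinality, then lexicographic. $f$ is $p$-knowable if it is finitary and $\mathbb E[(\max W(f))^p]<\infty$. $B_nf=\mathbf 1_{\{W(f)\subseteq[n]\}}f-\mathbf 1_{\{W(f)\not\subseteq[n]\}}$. *)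

From Stdlib Require Import Reals Lra Lia List Classical ClassicalEpsilon.
Open Scope R_scope.

(* Omega^infty = {-1,1}^N, encoded as nat -> bool (true = 1, false = -1).
   Coordinates are indexed by nat starting at 0; coordinate i is the
   paper's coordinate i+1, so [n] = {1..n} becomes {i | i < n}. *)
Definition Omega := nat -> bool.

Definition cyl (s : list bool) : Omega -> Prop :=
  fun w => forall i, (i < length s)%nat -> w i = nth i s false.

Inductive meas : (Omega -> Prop) -> Prop :=
| meas_cyl : forall s, meas (cyl s)
| meas_compl : forall A, meas A -> meas (fun w => ~ A w)
| meas_union : forall A : nat -> Omega -> Prop,
    (forall n, meas (A n)) -> meas (fun w => exists n, A n w)
| meas_ext : forall A B : Omega -> Prop,
    meas A -> (forall w, A w <-> B w) -> meas B.

(* Countable covers by cylinders (None = empty piece). *)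
Definition covers (A : Omega -> Prop) (s : nat -> option (list bool)) : Prop :=
  forall w, A w -> exists j c, s j = Some c /\ cyl c w.

Definition cweight (s : nat -> option (list bool)) (j : nat) : R :=
  match s j with None => 0 | Some c => (/ 2) ^ length c end.

(* r is the outer measure (infimum of total weights of covers) of A. *)
Definition outer_is (A : Omega -> Prop) (r : R) : Prop :=
  (forall s, covers A s -> forall eps, eps > 0 ->
       exists N, r - eps < sum_f_R0 (cweight s) N) /\
  (forall eps, eps > 0 -> exists s, covers A s /\
       forall N, sum_f_R0 (cweight s) N <= r + eps).

(* Uniform product probability (outer measure; equals the product measure
   on measurable sets). *)
Definition Pr (A : Omega -> Prop) : R := epsilon (inhabits 0) (outer_is A).

Definition measurable_fun (f : Omega -> bool) : Prop :=
  meas (fun w => f w = true).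

Definition flip (k : nat) (w : Omega) : Omega :=
  fun i => if Nat.eqb i k then negb (w i) else w i.

Definition Inf (k : nat) (f : Omega -> bool) : R :=
  Pr (fun w => f (flip k w) <> f w).

Definition finite_set (W : nat -> Prop) : Prop :=
  exists N, forall i, W i -> (i < N)%nat.

Definition witness (f : Omega -> bool) (w : Omega) (W : nat -> Prop) : Prop :=
  exists A, meas A /\ Pr A = 1 /\
    forall w', A w' -> (forall i, W i -> w' i = w i) -> f w' = f w.

Definition finitary (f : Omega -> bool) : Prop :=
  exists A, meas A /\ Pr A = 1 /\
    forall w, A w -> exists W, finite_set W /\ witness f w W.

(* "W(f)(w) is a subset of [n]": since the order on finite witness sets
   compares the maximum first, the least finite witness set is contained
   in [n] iff some witness set is contained in [n]. *)
Definition W_sub (f : Omega -> bool) (w : Omega) (n : nat) : Prop :=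
  exists W, (forall i, W i -> (i < n)%nat) /\ witness f w W.

(* maxW f w m : max W(f)(w) = m (1-based max; max of empty set = 0),
   i.e. m is the least n such that W(f)(w) is a subset of [n]. *)
Definition maxW (f : Omega -> bool) (w : Omega) (m : nat) : Prop :=
  W_sub f w m /\ forall n, W_sub f w n -> (m <= n)%nat.

Definition B (n : nat) (f : Omega -> bool) : Omega -> bool :=
  fun w => if excluded_middle_informative (W_sub f w n) then f w else false.

Definition powp (p : R) (m : nat) : R :=
  match m with O => 0 | _ => Rpower (INR m) p end.

Definition knowable (p : R) (f : Omega -> bool) : Prop :=
  finitary f /\
  exists l, infinite_sum (fun m => powp p m * Pr (fun w => maxW f w m)) l.

From Stdlib Require Import Reals Lra Lia List Classical ClassicalEpsilon.
Open Scope R_scope.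
Import ListNotations.

(** Let [G n] be the event that [W(f)] is not contained in [[n]]. Off [G n]
    we have [B n f = f], so [|I_k(B n f) - I_k(f)| <= 2 P(G n)], and
    [P(G n) -> 0] by continuity from above because [f] is finitary.  For the
    sums, the terms are dominated uniformly in [n]: [I_k(f) <= P(G k)], since
    off [G k] flipping bit [k] does not change [f]; and [I_k(B n f) <= 3 P(G k)],
    since for [n <= k] the function [B n f] almost surely depends on the first
    [n] bits only.  Finally [P(G k) <= P(max W > k) =: T k], where
    [sum_k T k = E[max W] <= E[(max W)^p]] for [p >= 1] and
    [sum_k (T k)^2 <= E[(max W)^p]^2] for [p >= 1/2], so dominated convergence
    for series applies.  [Pr] is the outer measure of cylinder covers; it is
    countably subadditive and all [meas] sets are Carathéodory measurable for
    it, which provides the additivity used along the way. *)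

Fixpoint fsum (g : nat -> R) (n : nat) : R :=
  match n with O => 0 | S n' => fsum g n' + g n' end.

Lemma sum_f_R0_fsum g N : sum_f_R0 g N = fsum g (S N).
Proof. induction N as [|N IH]; simpl in *; [lra | rewrite IH; simpl; lra]. Qed.

Lemma fsum_ext g h n : (forall i, (i < n)%nat -> g i = h i) -> fsum g n = fsum h n.
Proof. induction n as [|n IH]; intros H; simpl; [lra | rewrite IH, H; auto]. Qed.

Lemma fsum_le g h n : (forall i, (i < n)%nat -> g i <= h i) -> fsum g n <= fsum h n.
Proof.
  induction n as [|n IH]; intros H; simpl; [lra|].
  pose proof (H n (Nat.lt_succ_diag_r n)).
  pose proof (IH (fun i Hi => H i (Nat.lt_lt_succ_r _ _ Hi))).
  lra.
Qed.

Lemma fsum_nonneg g n : (forall i, 0 <= g i) -> 0 <= fsum g n.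
Proof. intros H; induction n as [|n IH]; simpl; [lra|]. specialize (H n). lra. Qed.

Lemma fsum_add g a b : fsum g (a + b) = fsum g a + fsum (fun i => g (a + i)%nat) b.
Proof.
  induction b as [|b IH]; simpl; [rewrite Nat.add_0_r; lra|].
  rewrite Nat.add_succ_r. simpl. rewrite IH. lra.
Qed.

Lemma fsum_le_mono g n m : (forall i, 0 <= g i) -> (n <= m)%nat -> fsum g n <= fsum g m.
Proof.
  intros Hg Hnm. replace m with (n + (m - n))%nat by lia. rewrite fsum_add.
  pose proof (fsum_nonneg (fun i => g (n + i)%nat) (m - n) (fun i => Hg _)). lra.
Qed.

Lemma fsum_plus g h n : fsum (fun i => g i + h i) n = fsum g n + fsum h n.
Proof. induction n as [|n IH]; simpl; [lra | rewrite IH; lra]. Qed.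

Lemma fsum_scal c g n : fsum (fun i => c * g i) n = c * fsum g n.
Proof. induction n as [|n IH]; simpl; [lra | rewrite IH; lra]. Qed.

Lemma fsum_const c n : fsum (fun _ => c) n = INR n * c.
Proof. induction n as [|n IH]; simpl fsum; [simpl; lra | rewrite IH, S_INR; lra]. Qed.

Lemma fsum_block g K n :
  fsum g (n * K) = fsum (fun j => fsum (fun t => g (j * K + t)%nat) K) n.
Proof.
  induction n as [|n IH]; [simpl; lra|].
  replace (S n * K)%nat with (n * K + K)%nat by lia.
  rewrite fsum_add, IH. simpl. lra.
Qed.

Lemma geom_half_fsum K : fsum (fun n => (/ 2) ^ S n) K = 1 - (/ 2) ^ K.
Proof. induction K as [|K IH]; cbn [fsum]; [simpl; lra | rewrite IH; simpl; lra]. Qed.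

Definition diag_next (p : nat * nat) : nat * nat :=
  match p with (n, O) => (O, S n) | (n, S i) => (S n, i) end.

Fixpoint diag_enum (j : nat) : nat * nat :=
  match j with O => (O, O) | S j' => diag_next (diag_enum j') end.

Fixpoint tri (d : nat) : nat := match d with O => O | S d' => (tri d' + S d')%nat end.

Lemma diag_enum_tri d t : (t <= d)%nat -> diag_enum (tri d + t) = (t, (d - t)%nat).
Proof.
  revert t. induction d as [|d IHd]; intros t Ht.
  - replace t with O by lia. reflexivity.
  - induction t as [|t IHt].
    + replace (tri (S d) + 0)%nat with (S (tri d + d)) by (simpl; lia). simpl.
      rewrite (IHd d), Nat.sub_diag by lia. reflexivity.
    + replace (tri (S d) + S t)%nat with (S (tri (S d) + t)) by lia. simpl diag_enum.
      change (tri d + S d)%nat with (tri (S d)). rewrite IHt by lia. unfold diag_next.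
      destruct (S d - t)%nat eqn:E; [lia | f_equal; lia].
Qed.

Lemma diag_enum_surj n i : diag_enum (tri (n + i) + n) = (n, i).
Proof. rewrite diag_enum_tri by lia. f_equal. lia. Qed.

Lemma le_tri K : (K <= tri K)%nat.
Proof. induction K; simpl; lia. Qed.

Lemma fsum_diag_enum h K :
  fsum (fun j => h (diag_enum j)) (tri K) = fsum (fun n => fsum (fun i => h (n, i)) (K - n)) K.
Proof.
  induction K as [|K IH]; [reflexivity|].
  simpl tri. rewrite fsum_add, IH.
  rewrite (fsum_ext (fun i => h (diag_enum (tri K + i))) (fun t => h (t, (K - t)%nat)))
    by (intros; rewrite diag_enum_tri by lia; reflexivity).
  rewrite (fsum_ext (fun n => fsum (fun i => h (n, i)) (S K - n))
                    (fun n => fsum (fun i => h (n, i)) (K - n) + h (n, (K - n)%nat))).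
  - rewrite fsum_plus. simpl fsum. rewrite !Nat.sub_diag. simpl fsum. lra.
  - intros n Hn. replace (S K - n)%nat with (S (K - n)) by lia. reflexivity.
Qed.

(** * The outer measure [Pr] *)

Definition cover_sum (s : nat -> option (list bool)) N := sum_f_R0 (cweight s) N.

Lemma cweight_nonneg s j : 0 <= cweight s j.
Proof. unfold cweight. destruct (s j); [apply pow_le|]; lra. Qed.

Lemma cover_sum_nonneg s N : 0 <= cover_sum s N.
Proof. unfold cover_sum. rewrite sum_f_R0_fsum. apply fsum_nonneg, cweight_nonneg. Qed.

Lemma cover_sum_le_mono s N M : (N <= M)%nat -> cover_sum s N <= cover_sum s M.
Proof.
  intros. unfold cover_sum. rewrite !sum_f_R0_fsum.
  apply fsum_le_mono; [apply cweight_nonneg | lia].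
Qed.

Definition cover_all : nat -> option (list bool) :=
  fun j => match j with O => Some [] | _ => None end.

Lemma covers_all A : covers A cover_all.
Proof. intros w _. exists O, []. split; [reflexivity | intros i Hi; simpl in Hi; lia]. Qed.

Lemma cover_sum_all N : cover_sum cover_all N = 1.
Proof.
  unfold cover_sum. induction N as [|N IH]; simpl; unfold cweight; simpl; [lra|].
  unfold cweight in IH. rewrite IH. lra.
Qed.

(* [E] consists of the negated total weights of covers of [A], so [- sup E]
   is their infimum. *)
Lemma outer_is_exists A : exists r, outer_is A r.
Proof.
  set (E := fun x => exists s, covers A s /\ forall N, cover_sum s N <= - x).
  assert (Hb : bound E).
  { exists 0. intros x [s [_ H]]. specialize (H O). pose proof (cover_sum_nonneg s O). lra. }
  assert (Hne : exists x, E x).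
  { exists (-1), cover_all. split; [apply covers_all|]. intros N. rewrite cover_sum_all. lra. }
  destruct (completeness E Hb Hne) as [m [Hub Hlub]].
  exists (- m). split.
  - intros s Hs eps Heps. apply NNPP. intros Hn.
    assert (HE : E (- (- m - eps))).
    { exists s. split; auto. intros N.
      apply Rnot_lt_le. intros Hlt. apply Hn. exists N. unfold cover_sum in *. lra. }
    specialize (Hub _ HE). lra.
  - intros eps Heps. apply NNPP. intros Hn.
    assert (Hu : is_upper_bound E (m - eps)).
    { intros x [s [Hs HN]]. apply Rnot_lt_le. intros Hlt. apply Hn. exists s. split; auto.
      intros N. specialize (HN N). unfold cover_sum in *. lra. }
    specialize (Hlub _ Hu). lra.
Qed.

Lemma Pr_spec A : outer_is A (Pr A).
Proof. unfold Pr. apply epsilon_spec, outer_is_exists. Qed.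

Lemma Pr_le_cover A s t : covers A s -> (forall N, cover_sum s N <= t) -> Pr A <= t.
Proof.
  intros Hs Ht. destruct (Pr_spec A) as [H _]. apply le_epsilon. intros eps Heps.
  destruct (H s Hs eps Heps) as [N HN]. specialize (Ht N). unfold cover_sum in Ht. lra.
Qed.

Lemma Pr_approx_cover A eps :
  eps > 0 -> exists s, covers A s /\ forall N, cover_sum s N <= Pr A + eps.
Proof. intros Heps. destruct (Pr_spec A) as [_ H]. apply H, Heps. Qed.

Lemma Pr_nonneg A : 0 <= Pr A.
Proof.
  apply le_epsilon. intros eps Heps. destruct (Pr_approx_cover A eps) as [s [_ Hs]]; [lra|].
  specialize (Hs O). pose proof (cover_sum_nonneg s O). lra.
Qed.

Lemma Pr_mono (A B : Omega -> Prop) : (forall w, A w -> B w) -> Pr A <= Pr B.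
Proof.
  intros H. apply le_epsilon. intros eps Heps.
  destruct (Pr_approx_cover B eps) as [s [Hs HN]]; [lra|].
  apply (Pr_le_cover A s); [intros w Hw; apply Hs, H, Hw | exact HN].
Qed.

Lemma Pr_ext (A B : Omega -> Prop) : (forall w, A w <-> B w) -> Pr A = Pr B.
Proof. intros H. apply Rle_antisym; apply Pr_mono; firstorder. Qed.

Lemma Pr_le_1 A : Pr A <= 1.
Proof.
  apply (Pr_le_cover A cover_all); [apply covers_all|]. intros. rewrite cover_sum_all. lra.
Qed.

Lemma Pr_empty (A : Omega -> Prop) : (forall w, ~ A w) -> Pr A = 0.
Proof.
  intros H. apply Rle_antisym; [|apply Pr_nonneg].
  apply (Pr_le_cover A (fun _ => None)); [intros w Hw; exfalso; eapply H; eauto|].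
  intros N. unfold cover_sum. rewrite sum_f_R0_fsum.
  rewrite (fsum_ext _ (fun _ => 0)), fsum_const by reflexivity. lra.
Qed.

(* The [n]-th set gets a cover of excess [eps / 2^(n+1)]; the covers are
   merged along [diag_enum]. *)
Lemma Pr_countable_subadditive (A : nat -> Omega -> Prop) L :
  (forall N, sum_f_R0 (fun n => Pr (A n)) N <= L) -> Pr (fun w => exists n, A n w) <= L.
Proof.
  intros HL. apply le_epsilon. intros eps Heps.
  destruct (choice (fun n s => covers (A n) s /\
                     forall N, cover_sum s N <= Pr (A n) + eps * (/ 2) ^ S n)) as [c Hc].
  { intros n. apply Pr_approx_cover. apply Rmult_lt_0_compat; [lra | apply pow_lt; lra]. }
  set (m := fun j => c (fst (diag_enum j)) (snd (diag_enum j))).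
  apply (Pr_le_cover _ m).
  - intros w [n Hn]. destruct (proj1 (Hc n) w Hn) as [i [cl [E1 E2]]].
    exists (tri (n + i) + n)%nat, cl. unfold m. rewrite diag_enum_surj. auto.
  - intros N. unfold cover_sum. rewrite sum_f_R0_fsum.
    apply Rle_trans with (fsum (cweight m) (tri (S N))).
    { apply fsum_le_mono; [apply cweight_nonneg | apply le_tri]. }
    change (fsum (cweight m) (tri (S N))) with
      (fsum (fun j => (fun p => cweight (c (fst p)) (snd p)) (diag_enum j)) (tri (S N))).
    rewrite fsum_diag_enum.
    apply Rle_trans with (fsum (fun n => Pr (A n) + eps * (/ 2) ^ S n) (S N)).
    + apply fsum_le. intros n Hn. cbn [fst snd].
      destruct (S N - n)%nat as [|k].
      * cbn [fsum]. pose proof (Pr_nonneg (A n)).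
        assert (0 <= eps * (/ 2) ^ S n) by (apply Rmult_le_pos; [lra | apply pow_le; lra]).
        lra.
      * pose proof (proj2 (Hc n) k) as Hk. unfold cover_sum in Hk.
        rewrite sum_f_R0_fsum in Hk. exact Hk.
    + rewrite fsum_plus, fsum_scal, geom_half_fsum, <- sum_f_R0_fsum.
      specialize (HL N).
      assert (0 < eps * (/ 2) ^ S N) by (apply Rmult_lt_0_compat; [lra | apply pow_lt; lra]).
      lra.
Qed.

Lemma Pr_union_le (A B : Omega -> Prop) : Pr (fun w => A w \/ B w) <= Pr A + Pr B.
Proof.
  set (F := fun n => match n with O => A | S O => B | _ => fun _ => False end).
  apply Rle_trans with (Pr (fun w => exists n, F n w)).
  { apply Pr_mono. intros w [H|H]; [exists O | exists 1%nat]; exact H. }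
  apply Pr_countable_subadditive. intros N. rewrite sum_f_R0_fsum.
  destruct N as [|N]; [simpl; pose proof (Pr_nonneg B); lra|].
  replace (S (S N)) with (2 + N)%nat by lia. rewrite fsum_add.
  rewrite (fsum_ext (fun i => Pr (F (2 + i)%nat)) (fun _ => 0)), fsum_const.
  - simpl. lra.
  - intros. apply Pr_empty. simpl. auto.
Qed.

Lemma Pr_union3_le (A B C : Omega -> Prop) :
  Pr (fun w => A w \/ B w \/ C w) <= Pr A + Pr B + Pr C.
Proof. eapply Rle_trans; [apply Pr_union_le|]. pose proof (Pr_union_le B C). lra. Qed.

(** * Carathéodory measurability of [meas] sets *)

Definition shift (w : Omega) : Omega := fun i => w (S i).

Lemma cyl_nil w : cyl [] w.
Proof. intros i Hi. simpl in Hi. lia. Qed.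

Lemma cyl_cons x l w : cyl (x :: l) w <-> w O = x /\ cyl l (shift w).
Proof.
  unfold cyl, shift; split.
  - intros H. split; [apply (H O); simpl; lia|]. intros i Hi. apply (H (S i)); simpl; lia.
  - intros [H0 H1] i Hi. destruct i; simpl; auto. apply H1. simpl in Hi; lia.
Qed.

Fixpoint cyl_inter (e c : list bool) : option (list bool) :=
  match e, c with
  | [], _ => Some c
  | _, [] => Some e
  | x :: e', y :: c' => if Bool.eqb x y then option_map (cons x) (cyl_inter e' c') else None
  end.

(* Disjoint cylinders whose union is [cyl e \ cyl c]. *)
Fixpoint cyl_diff (e c : list bool) : list (list bool) :=
  match c, e with
  | [], _ => []
  | y :: c', [] => [negb y] :: map (cons y) (cyl_diff [] c')
  | y :: c', x :: e' => if Bool.eqb x y then map (cons x) (cyl_diff e' c') else [e]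
  end.

Lemma cyl_inter_spec e c w :
  cyl e w -> cyl c w -> exists i, cyl_inter e c = Some i /\ cyl i w.
Proof.
  revert c w. induction e as [|x e IH]; intros c w He Hc; [exists c; auto|].
  destruct c as [|y c]; [exists (x :: e); auto|].
  apply cyl_cons in He as [H1 H2]. apply cyl_cons in Hc as [H3 H4].
  destruct (IH c (shift w) H2 H4) as [i [Hi Hi2]].
  exists (x :: i). simpl. rewrite (proj2 (Bool.eqb_true_iff x y)) by congruence.
  rewrite Hi. split; [reflexivity | apply cyl_cons; auto].
Qed.

Lemma cyl_diff_spec e c w :
  cyl e w -> ~ cyl c w -> exists d, In d (cyl_diff e c) /\ cyl d w.
Proof.
  revert e w. induction c as [|y c IH]; intros e w He Hc; [exfalso; apply Hc, cyl_nil|].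
  destruct e as [|x e].
  - destruct (Bool.bool_dec (w O) y) as [Hy|Hy].
    + assert (Hc' : ~ cyl c (shift w)) by (intros H; apply Hc, cyl_cons; auto).
      destruct (IH [] (shift w) (cyl_nil _) Hc') as [d [Hd1 Hd2]].
      exists (y :: d). split; [simpl; right; apply in_map; auto | apply cyl_cons; auto].
    + exists [negb y]. split; [simpl; auto|]. apply cyl_cons. split; [|apply cyl_nil].
      destruct (w O), y; simpl in *; congruence.
  - apply cyl_cons in He as [H1 H2]. simpl. destruct (Bool.eqb x y) eqn:Exy.
    + apply Bool.eqb_prop in Exy. subst.
      assert (Hc' : ~ cyl c (shift w)) by (intros H; apply Hc, cyl_cons; auto).
      destruct (IH e (shift w) H2 Hc') as [d [Hd1 Hd2]].
      exists (w O :: d). split; [apply in_map; auto | apply cyl_cons; auto].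
    + exists (x :: e). split; [simpl; auto | apply cyl_cons; auto].
Qed.

Definition cyl_weight (l : list bool) : R := (/ 2) ^ length l.

Definition cyl_weight_opt (o : option (list bool)) : R :=
  match o with None => 0 | Some l => cyl_weight l end.

Fixpoint cyl_weight_sum (L : list (list bool)) : R :=
  match L with [] => 0 | d :: L' => cyl_weight d + cyl_weight_sum L' end.

Lemma cyl_weight_sum_map_cons y L : cyl_weight_sum (map (cons y) L) = / 2 * cyl_weight_sum L.
Proof. induction L as [|d L IH]; simpl; [lra|]. rewrite IH. unfold cyl_weight. simpl. lra. Qed.

Lemma cyl_weight_opt_map_cons y o : cyl_weight_opt (option_map (cons y) o) = / 2 * cyl_weight_opt o.
Proof. destruct o; simpl; [unfold cyl_weight; simpl|]; lra. Qed.

Lemma cyl_weight_inter_diff e c :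
  cyl_weight_opt (cyl_inter e c) + cyl_weight_sum (cyl_diff e c) = cyl_weight e.
Proof.
  revert e. induction c as [|y c IH]; intros e; [destruct e; simpl; unfold cyl_weight; simpl; lra|].
  destruct e as [|x e].
  - simpl. rewrite cyl_weight_sum_map_cons. specialize (IH []).
    unfold cyl_weight_opt, cyl_weight in *. simpl in *. lra.
  - simpl. destruct (Bool.eqb x y); simpl; [|lra].
    rewrite cyl_weight_sum_map_cons, cyl_weight_opt_map_cons. specialize (IH e).
    unfold cyl_weight_opt, cyl_weight in *. simpl. lra.
Qed.

Lemma cyl_diff_length e c : (length (cyl_diff e c) <= length c)%nat.
Proof.
  revert e. induction c as [|y c IH]; intros e; simpl; [lia|].
  destruct e as [|x e]; simpl; [rewrite length_map; specialize (IH []); lia|].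
  destruct (Bool.eqb x y); simpl; [rewrite length_map; specialize (IH e)|]; lia.
Qed.

Lemma fsum_cyl_weight_nth_error L K :
  (length L <= K)%nat -> fsum (fun t => cyl_weight_opt (nth_error L t)) K = cyl_weight_sum L.
Proof.
  revert K. induction L as [|d L IH]; intros K HK.
  - rewrite (fsum_ext _ (fun _ => 0)), fsum_const; [simpl; lra|]. intros [|i] _; reflexivity.
  - destruct K as [|K]; [simpl in HK; lia|].
    replace (S K) with (1 + K)%nat by lia. rewrite fsum_add. simpl in HK.
    simpl cyl_weight_sum. rewrite <- (IH K) by lia. simpl. lra.
Qed.

Definition caratheodory (A : Omega -> Prop) : Prop :=
  forall E : Omega -> Prop, Pr (fun w => E w /\ A w) + Pr (fun w => E w /\ ~ A w) <= Pr E.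

Lemma divmod_block K j t : (t < K)%nat -> ((j * K + t) / K = j /\ (j * K + t) mod K = t)%nat.
Proof.
  intros H. assert (Hd : ((j * K + t) / K = j)%nat)
    by (rewrite Nat.div_add_l, Nat.div_small by lia; lia).
  split; auto. pose proof (Nat.div_mod_eq (j * K + t) K). rewrite Hd in *. lia.
Qed.

Definition cover_inter (s : nat -> option (list bool)) (c : list bool) (j : nat) :=
  match s j with Some e => cyl_inter e c | None => None end.

(* The pieces [cyl_diff e c] of the [j]-th cylinder [e] of [s] sit at the
   indices [j * K + t], [t < K := S (length c)]; they fit by [cyl_diff_length]. *)
Definition cover_diff (s : nat -> option (list bool)) (c : list bool) (k : nat) :=
  match s (k / S (length c))%nat with
  | Some e => nth_error (cyl_diff e c) (k mod S (length c)) | None => None end.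

Lemma covers_inter s c E :
  covers E s -> covers (fun w => E w /\ cyl c w) (cover_inter s c).
Proof.
  intros Hs w [HE Hc]. destruct (Hs w HE) as [j [e [Hj He]]].
  destruct (cyl_inter_spec e c w He Hc) as [i [Hi1 Hi2]].
  exists j, i. unfold cover_inter. rewrite Hj. auto.
Qed.

Lemma covers_diff s c E :
  covers E s -> covers (fun w => E w /\ ~ cyl c w) (cover_diff s c).
Proof.
  intros Hs w [HE Hc]. destruct (Hs w HE) as [j [e [Hj He]]].
  destruct (cyl_diff_spec e c w He Hc) as [d [Hd1 Hd2]].
  destruct (In_nth_error _ _ Hd1) as [t Ht].
  assert (Htl : (t < S (length c))%nat).
  { assert (t < length (cyl_diff e c))%nat by (apply nth_error_Some; congruence).
    pose proof (cyl_diff_length e c). lia. }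
  exists (j * S (length c) + t)%nat, d. unfold cover_diff.
  destruct (divmod_block _ j t Htl) as [-> ->]. rewrite Hj. auto.
Qed.

Lemma cover_sum_inter_diff s c J :
  cover_sum (cover_inter s c) J + fsum (cweight (cover_diff s c)) (S J * S (length c))
  = cover_sum s J.
Proof.
  unfold cover_sum. rewrite !sum_f_R0_fsum, fsum_block, <- fsum_plus.
  apply fsum_ext. intros j _.
  rewrite (fsum_ext _ (fun t => match s j with
                                | Some e => cyl_weight_opt (nth_error (cyl_diff e c) t)
                                | None => 0 end)).
  - unfold cover_inter, cweight. destruct (s j) as [e|]; [|rewrite fsum_const; simpl; lra].
    rewrite fsum_cyl_weight_nth_error; [apply cyl_weight_inter_diff|].
    pose proof (cyl_diff_length e c). lia.
  - intros t Ht. unfold cweight, cover_diff. destruct (divmod_block _ j t Ht) as [-> ->].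
    destruct (s j); reflexivity.
Qed.

Lemma caratheodory_cyl c : caratheodory (cyl c).
Proof.
  intros E. apply le_epsilon. intros eps Heps.
  destruct (Pr_approx_cover E eps) as [s [Hs HsN]]; [lra|].
  assert (H2 : forall N,
             Pr (fun w => E w /\ ~ cyl c w) <= Pr E + eps - cover_sum (cover_inter s c) N).
  { intros N. apply (Pr_le_cover _ _ _ (covers_diff s c E Hs)). intros M.
    set (J := Nat.max M N).
    pose proof (cover_sum_inter_diff s c J). pose proof (HsN J).
    pose proof (cover_sum_le_mono (cover_inter s c) N J ltac:(lia)).
    assert (cover_sum (cover_diff s c) M <= fsum (cweight (cover_diff s c)) (S J * S (length c))).
    { unfold cover_sum. rewrite sum_f_R0_fsum.
      apply fsum_le_mono; [apply cweight_nonneg | nia]. }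
    lra. }
  assert (H1 : Pr (fun w => E w /\ cyl c w) <= Pr E + eps - Pr (fun w => E w /\ ~ cyl c w)).
  { apply (Pr_le_cover _ _ _ (covers_inter s c E Hs)). intros N. specialize (H2 N). lra. }
  lra.
Qed.

Lemma caratheodory_ext (A B : Omega -> Prop) :
  caratheodory A -> (forall w, A w <-> B w) -> caratheodory B.
Proof.
  intros H HAB E.
  rewrite <- (Pr_ext (fun w => E w /\ A w) (fun w => E w /\ B w)) by firstorder.
  rewrite <- (Pr_ext (fun w => E w /\ ~ A w) (fun w => E w /\ ~ B w)) by firstorder.
  apply H.
Qed.

Lemma caratheodory_compl (A : Omega -> Prop) : caratheodory A -> caratheodory (fun w => ~ A w).
Proof.
  intros H E. rewrite (Pr_ext (fun w => E w /\ ~ ~ A w) (fun w => E w /\ A w)).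
  - specialize (H E). lra.
  - intros w. split; [intros [H1 H2]; split; auto; apply NNPP; auto | tauto].
Qed.

Lemma caratheodory_union (A B : Omega -> Prop) :
  caratheodory A -> caratheodory B -> caratheodory (fun w => A w \/ B w).
Proof.
  intros HA HB E.
  pose proof (HA E) as H1. pose proof (HB (fun w => E w /\ ~ A w)) as H2.
  assert (H3 : Pr (fun w => E w /\ (A w \/ B w)) <=
               Pr (fun w => E w /\ A w) + Pr (fun w => (E w /\ ~ A w) /\ B w)).
  { eapply Rle_trans; [|apply Pr_union_le]. apply Pr_mono.
    intros w [HE [Ha|Hb]]; auto. destruct (classic (A w)); auto. }
  rewrite (Pr_ext (fun w => E w /\ ~ (A w \/ B w)) (fun w => (E w /\ ~ A w) /\ ~ B w))
    by (intros; tauto).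
  lra.
Qed.

Lemma caratheodory_empty : caratheodory (fun _ => False).
Proof.
  intros E. rewrite Pr_empty by (intros w [_ H]; auto).
  rewrite (Pr_ext _ E) by (intros; tauto). lra.
Qed.

Lemma least_nat (P : nat -> Prop) :
  (exists n, P n) -> exists n, P n /\ forall m, (m < n)%nat -> ~ P m.
Proof.
  intros [n Hn]. induction n as [n IH] using (well_founded_induction Nat.lt_wf_0).
  destruct (classic (exists m, (m < n)%nat /\ P m)) as [[m [Hm1 Hm2]]|Hno].
  - exact (IH m Hm1 Hm2).
  - exists n. split; auto. intros m Hm HP. apply Hno. eauto.
Qed.

Section Countable_union.

Variable A : nat -> Omega -> Prop.
Hypothesis A_caratheodory : forall n, caratheodory (A n).

Let union_below n w := exists m, (m < n)%nat /\ A m w.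
Let new_part n w := A n w /\ ~ union_below n w.

Lemma caratheodory_union_below n : caratheodory (union_below n).
Proof.
  induction n as [|n IH].
  - apply (caratheodory_ext _ _ caratheodory_empty). intros w. split; [tauto|].
    intros [m [Hm _]]. lia.
  - apply (caratheodory_ext _ _ (caratheodory_union _ _ IH (A_caratheodory n))).
    intros w. unfold union_below. split.
    + intros [[m [Hm1 Hm2]]|H]; [exists m | exists n]; split; auto.
    + intros [m [Hm1 Hm2]]. destruct (Nat.eq_dec m n); [subst; right; auto|].
      left. exists m. split; auto. lia.
Qed.

Lemma fsum_Pr_new_part E n :
  fsum (fun m => Pr (fun w => E w /\ new_part m w)) n <= Pr (fun w => E w /\ union_below n w).
Proof.
  induction n as [|n IH]; [simpl; apply Pr_nonneg|].
  simpl. pose proof (caratheodory_union_below n (fun w => E w /\ union_below (S n) w)) as H.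
  cbv beta in H.
  rewrite (Pr_ext (fun w => (E w /\ union_below (S n) w) /\ union_below n w)
                  (fun w => E w /\ union_below n w)) in H.
  - rewrite (Pr_ext (fun w => (E w /\ union_below (S n) w) /\ ~ union_below n w)
                    (fun w => E w /\ new_part n w)) in H; [lra|].
    intros w. unfold new_part, union_below. split.
    + intros [[HE [m [Hm1 Hm2]]] Hn]. do 2 (split; auto).
      destruct (Nat.eq_dec m n); [subst; auto|].
      exfalso. apply Hn. exists m. split; auto. lia.
    + intros [HE [Ha Hn]]. do 2 (split; auto). exists n. auto.
  - intros w. unfold union_below. split; [tauto|]. intros [HE [m [Hm1 Hm2]]].
    split; [split; [exact HE | exists m; split; [lia | exact Hm2]] | exists m; auto].
Qed.

Lemma caratheodory_countable_union : caratheodory (fun w => exists n, A n w).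
Proof.
  intros E.
  assert (Hb : forall n, fsum (fun m => Pr (fun w => E w /\ new_part m w)) n <=
                         Pr E - Pr (fun w => E w /\ ~ (exists n, A n w))).
  { intros n. pose proof (caratheodory_union_below n E). pose proof (fsum_Pr_new_part E n).
    assert (Pr (fun w => E w /\ ~ (exists n, A n w)) <= Pr (fun w => E w /\ ~ union_below n w)).
    { apply Pr_mono. intros w [HE Hn]. split; auto. intros [m [_ Hm]]. apply Hn. eauto. }
    lra. }
  assert (Pr (fun w => E w /\ exists n, A n w) <=
          Pr E - Pr (fun w => E w /\ ~ (exists n, A n w))); [|lra].
  eapply Rle_trans; [|apply (Pr_countable_subadditive (fun m w => E w /\ new_part m w))].
  - apply Pr_mono. intros w [HE Hex]. destruct (least_nat _ Hex) as [n [Hn Hmin]].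
    exists n. do 2 (split; auto). intros [m [Hm1 Hm2]]. exact (Hmin m Hm1 Hm2).
  - intros N. rewrite sum_f_R0_fsum. apply Hb.
Qed.

End Countable_union.

Lemma meas_caratheodory A : meas A -> caratheodory A.
Proof.
  induction 1.
  - apply caratheodory_cyl.
  - apply caratheodory_compl; auto.
  - apply caratheodory_countable_union; auto.
  - eapply caratheodory_ext; eauto.
Qed.

Fixpoint flip_list (k : nat) (c : list bool) : list bool :=
  match c, k with
  | [], _ => []
  | x :: l, O => negb x :: l
  | x :: l, S k' => x :: flip_list k' l
  end.

Lemma flip_list_length k c : length (flip_list k c) = length c.
Proof. revert k; induction c as [|x c IH]; intros [|k]; simpl; auto. Qed.

Lemma cyl_flip k c w : cyl c (flip k w) -> cyl (flip_list k c) w.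
Proof.
  revert k w. induction c as [|x c IH]; intros k w H; [destruct k; apply cyl_nil|].
  apply cyl_cons in H as [H1 H2]. unfold flip in H1. simpl in H1.
  destruct k as [|k]; simpl; apply cyl_cons; split.
  - rewrite <- H1. destruct (w O); reflexivity.
  - intros i Hi. specialize (H2 i Hi). unfold shift, flip in H2. exact H2.
  - exact H1.
  - apply IH. intros i Hi. rewrite <- (H2 i Hi). reflexivity.
Qed.

Lemma Pr_flip_le k (A : Omega -> Prop) : Pr (fun w => A (flip k w)) <= Pr A.
Proof.
  apply le_epsilon. intros eps Heps.
  destruct (Pr_approx_cover A eps) as [s [Hs HN]]; [lra|].
  apply (Pr_le_cover _ (fun j => option_map (flip_list k) (s j))).
  - intros w Hw. destruct (Hs _ Hw) as [j [c [Hj Hc]]].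
    exists j, (flip_list k c). rewrite Hj. split; [reflexivity | apply cyl_flip; auto].
  - intros N. rewrite <- (HN N). unfold cover_sum. apply Req_le, sum_eq. intros i _.
    unfold cweight. destruct (s i); simpl; [rewrite flip_list_length|]; reflexivity.
Qed.

Lemma meas_empty : meas (fun _ => False).
Proof.
  apply (meas_ext (fun w => ~ cyl [] w)); [constructor; constructor|].
  intros w. split; [intros H; apply H, cyl_nil | tauto].
Qed.

Lemma meas_union A B : meas A -> meas B -> meas (fun w => A w \/ B w).
Proof.
  intros HA HB. apply (meas_ext (fun w => exists n, (match n with O => A | _ => B end) w)).
  - constructor. intros [|n]; auto.
  - intros w; split; [intros [[|n] H]; auto|].
    intros [H|H]; [exists O | exists 1%nat]; auto.
Qed.

Lemma meas_inter A B : meas A -> meas B -> meas (fun w => A w /\ B w).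
Proof.
  intros HA HB. apply (meas_ext (fun w => ~ (~ A w \/ ~ B w))).
  - constructor. apply meas_union; constructor; auto.
  - intros w. split; [intros H; split; apply NNPP; tauto | tauto].
Qed.

Fixpoint bool_lists (m : nat) : list (list bool) :=
  match m with
  | O => [[]]
  | S m' => map (cons true) (bool_lists m') ++ map (cons false) (bool_lists m')
  end.

Lemma in_bool_lists m l : length l = m -> In l (bool_lists m).
Proof.
  revert l. induction m as [|m IH]; intros [|x l] Hl; simpl in *; try lia; auto.
  apply in_or_app. destruct x; [left|right]; apply in_map, IH; lia.
Qed.

Lemma bool_lists_length m l : In l (bool_lists m) -> length l = m.
Proof.
  revert l. induction m as [|m IH]; intros l Hl; simpl in Hl.
  - destruct Hl as [<-|[]]. reflexivity.
  - apply in_app_or in Hl.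
    destruct Hl as [H|H]; apply in_map_iff in H; destruct H as [x [<- Hx]]; simpl; auto.
Qed.

Definition prefix (m : nat) (w : Omega) : list bool := map w (seq 0 m).

Lemma prefix_length m w : length (prefix m w) = m.
Proof. unfold prefix. rewrite length_map, length_seq. reflexivity. Qed.

Lemma nth_prefix m w i : (i < m)%nat -> nth i (prefix m w) false = w i.
Proof.
  intros H. unfold prefix.
  rewrite (nth_indep _ false (w O)) by (rewrite length_map, length_seq; auto).
  rewrite map_nth, seq_nth; auto.
Qed.

Lemma cyl_prefix m w w' : cyl (prefix m w) w' <-> forall i, (i < m)%nat -> w' i = w i.
Proof.
  unfold cyl. rewrite prefix_length.
  split; intros H i Hi; [rewrite (H i Hi)|]; rewrite nth_prefix; auto.
Qed.

Lemma prefix_of_cyl m l w : length l = m -> cyl l w -> prefix m w = l.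
Proof.
  intros Hl Hc. apply (nth_ext _ _ false false); rewrite prefix_length; auto.
  intros i Hi. rewrite nth_prefix by auto. apply (Hc i). lia.
Qed.

Lemma prefix_flip m k w : (m <= k)%nat -> prefix m (flip k w) = prefix m w.
Proof.
  intros H. apply map_ext_in. intros i Hi. apply in_seq in Hi.
  unfold flip. destruct (Nat.eqb_spec i k); [lia | reflexivity].
Qed.

Lemma meas_prefix m (P : list bool -> Prop) : meas (fun w => P (prefix m w)).
Proof.
  set (Fam := fun j => match nth_error (bool_lists m) j with
                       | Some l => fun w => P l /\ cyl l w | None => fun _ => False end).
  apply (meas_ext (fun w => exists j, Fam j w)).
  - constructor. intros j. unfold Fam. destruct (nth_error (bool_lists m) j) as [l|].
    + destruct (classic (P l)).
      * apply (meas_ext (cyl l)); [constructor | tauto].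
      * apply (meas_ext _ _ meas_empty). tauto.
    + apply meas_empty.
  - intros w. split.
    + intros [j Hj]. unfold Fam in Hj. destruct (nth_error (bool_lists m) j) eqn:E; [|tauto].
      destruct Hj as [HP Hc]. rewrite (prefix_of_cyl m l w); auto.
      apply (bool_lists_length m). eapply nth_error_In; eauto.
    + intros HP.
      destruct (In_nth_error _ _ (in_bool_lists m _ (prefix_length m w))) as [j Hj].
      exists j. unfold Fam. rewrite Hj. split; [exact HP | apply cyl_prefix; auto].
Qed.

(** * Continuity from above, and limits of series *)

Lemma Pr_telescope (X : nat -> Omega -> Prop) :
  (forall n, caratheodory (X n)) -> (forall n w, X (S n) w -> X n w) ->
  forall J, fsum (fun j => Pr (fun w => X j w /\ ~ X (S j) w)) J + Pr (X J) <= Pr (X O).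
Proof.
  intros HX Hdec J. induction J as [|J IH]; simpl; [lra|].
  pose proof (HX (S J) (X J)) as H.
  rewrite (Pr_ext (fun w => X J w /\ X (S J) w) (X (S J))) in H
    by (intros w; split; [tauto | auto]).
  lra.
Qed.

Lemma Pr_le_null_union_diff (X : nat -> Omega -> Prop) (Z : Omega -> Prop) L :
  (forall w, (forall n, X n w) -> Z w) -> Pr Z = 0 ->
  (forall N, fsum (fun j => Pr (fun w => X j w /\ ~ X (S j) w)) N <= L) -> Pr (X O) <= L.
Proof.
  intros Hint HZ HL.
  set (Fam := fun j => match j with O => Z | S j' => fun w => X j' w /\ ~ X (S j') w end).
  apply Rle_trans with (Pr (fun w => exists j, Fam j w)).
  - apply Pr_mono. intros w Hw. destruct (classic (forall n, X n w)) as [Hall|Hno].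
    + exists O. exact (Hint w Hall).
    + apply not_all_ex_not in Hno. destruct (least_nat _ Hno) as [[|m] [Hm Hmin]].
      * contradiction.
      * exists (S m). split; [|exact Hm].
        apply NNPP. intros Hc. exact (Hmin m (Nat.lt_succ_diag_r m) Hc).
  - apply Pr_countable_subadditive. intros N. rewrite sum_f_R0_fsum.
    replace (S N) with (1 + N)%nat by lia. rewrite fsum_add. simpl fsum at 1.
    change (Pr (Fam O)) with (Pr Z). rewrite HZ. specialize (HL N). simpl. lra.
Qed.

Lemma Un_cv_const c : Un_cv (fun _ => c) c.
Proof. intros eps Heps. exists O. intros. unfold Rdist. rewrite Rminus_diag, Rabs_R0. lra. Qed.

(* With [L] the limit, [Pr (X 0) <= Pr Z + sum_j Pr (X j \ X (S j)) <= Pr (X 0) - L]. *)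
Lemma Pr_decreasing_cv0 (X : nat -> Omega -> Prop) (Z : Omega -> Prop) :
  (forall n, caratheodory (X n)) -> (forall n w, X (S n) w -> X n w) ->
  (forall w, (forall n, X n w) -> Z w) -> Pr Z = 0 -> Un_cv (fun n => Pr (X n)) 0.
Proof.
  intros HX Hdec Hint HZ.
  assert (Hmono : Un_decreasing (fun n => Pr (X n))) by (intros n; apply Pr_mono, Hdec).
  assert (Hlb : has_lb (fun n => Pr (X n))).
  { exists 0. intros x [i ->]. unfold opp_seq. pose proof (Pr_nonneg (X i)). lra. }
  destruct (decreasing_cv _ Hmono Hlb) as [L HL].
  assert (HL0 : 0 <= L).
  { apply Rle_cv_lim with (Un := fun _ => 0) (Vn := fun n => Pr (X n));
      auto using Pr_nonneg, Un_cv_const. }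
  assert (HLle : L <= 0).
  { assert (H : Pr (X O) <= Pr (X O) - L); [|lra].
    apply (Pr_le_null_union_diff X Z); auto. intros N.
    pose proof (Pr_telescope X HX Hdec N). pose proof (decreasing_ineq _ L Hmono HL N). lra. }
  replace 0 with L by lra. exact HL.
Qed.

Lemma fsum_cv (u : nat -> nat -> R) (L : nat -> R) K :
  (forall k, Un_cv (u k) (L k)) -> Un_cv (fun N => fsum (fun k => u k N) K) (fsum L K).
Proof.
  intros H. induction K as [|K IH]; simpl; [apply Un_cv_const | apply CV_plus; auto].
Qed.

Lemma Un_cv_le_const u l c : Un_cv u l -> (forall n, u n <= c) -> l <= c.
Proof.
  intros H1 H2. apply Rle_cv_lim with (Un := u) (Vn := fun _ => c); auto using Un_cv_const.
Qed.

Lemma summable_of_bounded g C :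
  (forall k, 0 <= g k) -> (forall K, fsum g K <= C) -> exists G, infinite_sum g G.
Proof.
  intros Hg HC.
  assert (Hgr : Un_growing (fun N => sum_f_R0 g N))
    by (intros n; simpl; specialize (Hg (S n)); lra).
  destruct (growing_cv _ Hgr) as [G HG]; [|exists G; exact HG].
  exists C. intros x [i ->]. rewrite sum_f_R0_fsum. auto.
Qed.

(* The tails beyond [K] are bounded uniformly in [n] by the tail of [g]
   ([sum_maj1]), and the first [K] terms converge. *)
Lemma series_dominated_cv (a : nat -> nat -> R) (b g : nat -> R) G :
  (forall n k, 0 <= a n k <= g k) -> (forall k, 0 <= b k <= g k) -> infinite_sum g G ->
  (forall k, Un_cv (fun n => a n k) (b k)) ->
  exists Bs, infinite_sum b Bs /\
  exists As : nat -> R, (forall n, infinite_sum (a n) (As n)) /\ Un_cv As Bs.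
Proof.
  intros Ha Hb HG Hcv.
  destruct (Rseries_CV_comp b g Hb (exist _ G HG)) as [Bs HBs].
  destruct (choice (fun n s => infinite_sum (a n) s)) as [As HAs].
  { intros n. destruct (Rseries_CV_comp (a n) g (Ha n) (exist _ G HG)) as [s Hs]. eauto. }
  exists Bs. split; [exact HBs|]. exists As. split; [exact HAs|].
  intros eps Heps.
  destruct (HG (eps / 4)) as [K HK]; [lra|]. specialize (HK K (le_n K)). unfold Rdist in HK.
  assert (Hhead : Un_cv (fun n => sum_f_R0 (a n) K) (sum_f_R0 b K)).
  { apply (Un_cv_ext (fun n => fsum (fun k => a n k) (S K))).
    - intros n. rewrite sum_f_R0_fsum. reflexivity.
    - rewrite sum_f_R0_fsum. apply fsum_cv. exact Hcv. }
  destruct (Hhead (eps / 2)) as [N HN]; [lra|].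
  exists N. intros n Hn. specialize (HN n Hn). unfold Rdist in *.
  assert (Hta : Rabs (As n - sum_f_R0 (a n) K) <= G - sum_f_R0 g K).
  { apply (sum_maj1 (fun k _ => a n k) g 0); [exact (HAs n) | exact HG |].
    intros k. rewrite Rabs_pos_eq; apply Ha. }
  assert (Htb : Rabs (Bs - sum_f_R0 b K) <= G - sum_f_R0 g K).
  { apply (sum_maj1 (fun k _ => b k) g 0); [exact HBs | exact HG |].
    intros k. rewrite Rabs_pos_eq; apply Hb. }
  apply Rabs_def2 in HN. apply Rabs_def2 in HK.
  assert (Hta' : Rabs (As n - sum_f_R0 (a n) K) < eps / 4) by lra.
  assert (Htb' : Rabs (Bs - sum_f_R0 b K) < eps / 4) by lra.
  apply Rabs_def2 in Hta'. apply Rabs_def2 in Htb'.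
  apply Rabs_def1; lra.
Qed.

(** * Tail sums of a distribution with a finite [p]-th moment *)

Lemma powp_nonneg p m : 0 <= powp p m.
Proof. destruct m; simpl; [lra | unfold Rpower; left; apply exp_pos]. Qed.

Lemma INR_S_pos m : 0 < INR (S m).
Proof. apply lt_0_INR. lia. Qed.

Lemma Rpower_INR_S_le p p' m : p <= p' -> Rpower (INR (S m)) p <= Rpower (INR (S m)) p'.
Proof. intros H. apply Rle_Rpower; [rewrite S_INR; pose proof (pos_INR m); lra | exact H]. Qed.

Lemma powp_S_ge1 p m : 0 <= p -> 1 <= powp p (S m).
Proof.
  intros Hp. unfold powp. rewrite <- (Rpower_O (INR (S m))) by apply INR_S_pos.
  apply Rpower_INR_S_le, Hp.
Qed.

Lemma INR_S_le_Rpower p m : 1 <= p -> INR (S m) <= Rpower (INR (S m)) p.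
Proof.
  intros Hp. rewrite <- (Rpower_1 (INR (S m))) at 1 by apply INR_S_pos.
  apply Rpower_INR_S_le, Hp.
Qed.

Lemma INR_S_le_Rpower_mul p i M :
  1/2 <= p -> (i <= M)%nat -> INR (S i) <= Rpower (INR (S M)) p * Rpower (INR (S i)) p.
Proof.
  intros Hp HiM. apply Rle_trans with (Rpower (INR (S i)) (p + p)).
  - rewrite <- (Rpower_1 (INR (S i))) at 1 by apply INR_S_pos. apply Rpower_INR_S_le. lra.
  - rewrite Rpower_plus. apply Rmult_le_compat_r; [left; apply exp_pos|].
    apply Rle_Rpower_l; [lra|]. split; [apply INR_S_pos | apply le_INR; lia].
Qed.

Section Tail_sums.

Variable q : nat -> R.
Variables p l : R.
Hypothesis q_nonneg : forall m, 0 <= q m.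
Hypothesis p_nonneg : 0 <= p.
Hypothesis moment_sum : infinite_sum (fun m => powp p m * q m) l.

Definition tail_part k N := fsum (fun j => q (S k + j)%nat) N.

Definition moment_part M := fsum (fun m => powp p (S m) * q (S m)) M.

Lemma tail_part_nonneg k N : 0 <= tail_part k N.
Proof. apply fsum_nonneg. auto. Qed.

Lemma tail_part_le_mono k N M : (N <= M)%nat -> tail_part k N <= tail_part k M.
Proof. apply fsum_le_mono. auto. Qed.

Lemma tail_part_S k N : tail_part k (S N) = tail_part k N + q (S k + N)%nat.
Proof. reflexivity. Qed.

Lemma tail_part_1 k : tail_part k 1 = q (S k).
Proof. unfold tail_part. cbn [fsum]. rewrite Nat.add_0_r. lra. Qed.

Lemma powp_q_nonneg m : 0 <= powp p m * q m.
Proof. apply Rmult_le_pos; [apply powp_nonneg | auto]. Qed.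

Lemma moment_part_nonneg M : 0 <= moment_part M.
Proof. apply fsum_nonneg. intros. apply powp_q_nonneg. Qed.

Lemma moment_part_le M : moment_part M <= l.
Proof.
  apply Rle_trans with (fsum (fun m => powp p m * q m) (1 + M)).
  - rewrite fsum_add. cbn [fsum Nat.add]. change (powp p 0) with 0. unfold moment_part. lra.
  - rewrite <- sum_f_R0_fsum. apply sum_incr; [exact moment_sum | apply powp_q_nonneg].
Qed.

Lemma tail_part_le k N : tail_part k N <= l.
Proof.
  apply Rle_trans with (fsum (fun j => powp p (S k + j) * q (S k + j)%nat) N).
  - apply fsum_le. intros i _. pose proof (powp_S_ge1 p (k + i) p_nonneg).
    pose proof (q_nonneg (S k + i)). simpl plus in *. nra.
  - apply Rle_trans with (moment_part (k + N)); [|apply moment_part_le].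
    unfold moment_part. rewrite fsum_add.
    pose proof (fsum_nonneg (fun m => powp p (S m) * q (S m)) k (fun m => powp_q_nonneg (S m))).
    assert (fsum (fun j => powp p (S k + j) * q (S k + j)%nat) N =
            fsum (fun i => powp p (S (k + i)) * q (S (k + i))) N) by reflexivity.
    lra.
Qed.

Lemma tail_mass_exists k : {T | Un_cv (tail_part k) T}.
Proof.
  apply growing_cv; [intros n; rewrite tail_part_S; specialize (q_nonneg (S k + n)); lra|].
  exists l. intros x [i ->]. apply tail_part_le.
Qed.

Definition tail_mass k := proj1_sig (tail_mass_exists k).

Lemma tail_mass_cv k : Un_cv (tail_part k) (tail_mass k).
Proof. exact (proj2_sig (tail_mass_exists k)). Qed.

Lemma tail_part_le_tail_mass k N : tail_part k N <= tail_mass k.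
Proof.
  apply growing_ineq; [|apply tail_mass_cv].
  intros n. rewrite tail_part_S. specialize (q_nonneg (S k + n)). lra.
Qed.

Lemma fsum_tail_part_diag M :
  fsum (fun k => tail_part k (M - k)) M = fsum (fun m => INR (S m) * q (S m)) M.
Proof.
  induction M as [|M IH]; [reflexivity|]. cbn [fsum].
  replace (S M - M)%nat with 1%nat by lia. rewrite <- IH, tail_part_1.
  rewrite (fsum_ext _ (fun k => tail_part k (M - k) + q (S M))).
  - rewrite fsum_plus, fsum_const, S_INR. lra.
  - intros k Hk. replace (S M - k)%nat with (S (M - k)) by lia.
    rewrite tail_part_S. do 2 f_equal. lia.
Qed.

Lemma fsum_tail_part_diag_le M (Hp1 : 1 <= p) :
  fsum (fun k => tail_part k (M - k)) M <= moment_part M.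
Proof.
  rewrite fsum_tail_part_diag. apply fsum_le. intros i _. unfold powp.
  pose proof (INR_S_le_Rpower p i Hp1). pose proof (q_nonneg (S i)). nra.
Qed.

(* Raising [M] by one adds [q (M+1)] to every tail; the resulting increase
   [2 q (M+1) (sum of tails) + (M+1) q (M+1)^2] of the left-hand side is
   dominated by the increase of the square, using [m <= m^p (M+1)^p] and
   [M+1 <= (M+1)^(2p)]. *)
Lemma fsum_tail_part_diag_sq_le M (Hp2 : 1/2 <= p) :
  fsum (fun k => tail_part k (M - k) * tail_part k (M - k)) M <= moment_part M * moment_part M.
Proof.
  induction M as [|M IH]; [unfold moment_part; simpl; lra|].
  set (R := Rpower (INR (S M)) p).
  set (Z := fsum (fun k => tail_part k (M - k)) M).
  assert (Hstep : fsum (fun k => tail_part k (S M - k) * tail_part k (S M - k)) (S M) =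
                  fsum (fun k => tail_part k (M - k) * tail_part k (M - k)) M
                  + 2 * q (S M) * Z + INR (S M) * (q (S M) * q (S M))).
  { cbn [fsum]. replace (S M - M)%nat with 1%nat by lia. rewrite tail_part_1.
    rewrite (fsum_ext _ (fun k => tail_part k (M - k) * tail_part k (M - k)
                                 + 2 * q (S M) * tail_part k (M - k) + q (S M) * q (S M))).
    - rewrite !fsum_plus, fsum_scal, fsum_const, S_INR. unfold Z. lra.
    - intros k Hk. replace (S M - k)%nat with (S (M - k)) by lia. rewrite tail_part_S.
      replace (S k + (M - k))%nat with (S M) by lia. ring. }
  assert (HY : moment_part (S M) = moment_part M + R * q (S M)) by reflexivity.
  pose proof (INR_S_le_Rpower_mul p M M Hp2 (le_n M)) as HR. fold R in HR.
  assert (HZ : Z <= R * moment_part M).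
  { unfold Z. rewrite fsum_tail_part_diag. unfold moment_part. rewrite <- fsum_scal.
    apply fsum_le. intros i Hi.
    pose proof (INR_S_le_Rpower_mul p i M Hp2 ltac:(lia)). pose proof (q_nonneg (S i)).
    unfold powp, R. nra. }
  rewrite Hstep, HY. pose proof (q_nonneg (S M)). pose proof (moment_part_nonneg M).
  assert (q (S M) * Z <= q (S M) * (R * moment_part M)) by (apply Rmult_le_compat_l; auto).
  assert (INR (S M) * (q (S M) * q (S M)) <= R * R * (q (S M) * q (S M)))
    by (apply Rmult_le_compat_r; nra).
  nra.
Qed.

Lemma tail_mass_sum_le (Hp1 : 1 <= p) K : fsum tail_mass K <= l.
Proof.
  apply Un_cv_le_const with (u := fun N => fsum (fun k => tail_part k N) K).
  { apply fsum_cv, tail_mass_cv. }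
  intros N. apply Rle_trans with (fsum (fun k => tail_part k (K + N - k)) (K + N)).
  - apply Rle_trans with (fsum (fun k => tail_part k (K + N - k)) K).
    + apply fsum_le. intros. apply tail_part_le_mono. lia.
    + apply fsum_le_mono; [intros; apply tail_part_nonneg | lia].
  - eapply Rle_trans; [apply fsum_tail_part_diag_le, Hp1 | apply moment_part_le].
Qed.

Lemma tail_mass_sq_sum_le (Hp2 : 1/2 <= p) K : fsum (fun k => tail_mass k * tail_mass k) K <= l * l.
Proof.
  apply Un_cv_le_const with (u := fun N => fsum (fun k => tail_part k N * tail_part k N) K).
  { apply fsum_cv. intros k. apply CV_mult; apply tail_mass_cv. }
  intros N.
  apply Rle_trans with
    (fsum (fun k => tail_part k (K + N - k) * tail_part k (K + N - k)) (K + N)).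
  - apply Rle_trans with (fsum (fun k => tail_part k (K + N - k) * tail_part k (K + N - k)) K).
    + apply fsum_le. intros k Hk.
      pose proof (tail_part_le_mono k N (K + N - k) ltac:(lia)). pose proof (tail_part_nonneg k N).
      nra.
    + apply fsum_le_mono; [|lia]. intros k. pose proof (tail_part_nonneg k (K + N - k)). nra.
  - eapply Rle_trans; [apply fsum_tail_part_diag_sq_le, Hp2|].
    pose proof (moment_part_le (K + N)). pose proof (moment_part_nonneg (K + N)). nra.
Qed.

End Tail_sums.

(** * Influences of [B n f] *)

Lemma Inf_le_of_agree (g h : Omega -> bool) (G : Omega -> Prop) k :
  (forall w, G w -> g w = h w) -> Inf k g <= Inf k h + 2 * Pr (fun w => ~ G w).
Proof.
  intros Hgh. unfold Inf.
  apply Rle_trans with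
    (Pr (fun w => h (flip k w) <> h w \/ ~ G w \/ (fun w => ~ G w) (flip k w))).
  - apply Pr_mono. intros w Hw.
    destruct (classic (G w)) as [H1|H1]; [|right; left; exact H1].
    destruct (classic (G (flip k w))) as [H2|H2]; [|right; right; exact H2].
    left. rewrite <- !Hgh by assumption. exact Hw.
  - pose proof (Pr_union3_le (fun w => h (flip k w) <> h w) (fun w => ~ G w)
                             (fun w => ~ G (flip k w))).
    pose proof (Pr_flip_le k (fun w => ~ G w)). lra.
Qed.

Lemma B_eq f n w : W_sub f w n -> B n f w = f w.
Proof. intros H. unfold B. destruct (excluded_middle_informative (W_sub f w n)); tauto. Qed.

Lemma B_neq f n w : ~ W_sub f w n -> B n f w = false.
Proof. intros H. unfold B. destruct (excluded_middle_informative (W_sub f w n)); tauto. Qed.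

Lemma W_sub_mono f w n m : (n <= m)%nat -> W_sub f w n -> W_sub f w m.
Proof.
  intros H [W [HW Hw]]. exists W. split; [intros i Hi; specialize (HW i Hi); lia | exact Hw].
Qed.

Lemma Rabs_Inf_B_sub_le f n k :
  Rabs (Inf k (B n f) - Inf k f) <= 2 * Pr (fun w => ~ W_sub f w n).
Proof.
  pose proof (Inf_le_of_agree (B n f) f _ k (B_eq f n)).
  pose proof (Inf_le_of_agree f (B n f) _ k (fun w Hw => eq_sym (B_eq f n w Hw))).
  apply Rabs_le. lra.
Qed.

Section Boolean_function.

Variable f : Omega -> bool.
Hypothesis f_meas : measurable_fun f.
Hypothesis f_finitary : finitary f.

Definition determined (c : list bool) (b : bool) : Prop :=
  exists A, meas A /\ Pr A = 1 /\ forall w, A w -> cyl c w -> f w = b.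

Lemma W_sub_determined w n : W_sub f w n <-> determined (prefix n w) (f w).
Proof.
  split.
  - intros [W [HW [A [H1 [H2 H3]]]]]. exists A. do 2 (split; auto).
    intros w' Hw' Hc. apply H3; auto. intros i Hi. apply (proj1 (cyl_prefix n w w') Hc). auto.
  - intros [A [H1 [H2 H3]]]. exists (fun i => (i < n)%nat). split; auto.
    exists A. do 2 (split; auto). intros w' Hw' Hag. apply H3; auto. apply cyl_prefix. auto.
Qed.

Lemma meas_W_sub n : meas (fun w => W_sub f w n).
Proof.
  apply (meas_ext (fun w => (f w = true /\ determined (prefix n w) true) \/
                            (f w = false /\ determined (prefix n w) false))).
  - assert (Hf : meas (fun w => f w = false)).
    { apply (meas_ext (fun w => ~ f w = true)); [constructor; exact f_meas|].
      intros w. destruct (f w); intuition congruence. }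
    apply meas_union; apply meas_inter; auto;
      [apply (meas_prefix n (fun c => determined c true))
      |apply (meas_prefix n (fun c => determined c false))].
  - intros w. rewrite W_sub_determined. destruct (f w); intuition congruence.
Qed.

Lemma Pr_full : Pr (fun _ => True) = 1.
Proof.
  destruct f_finitary as [A [_ [HP _]]].
  apply Rle_antisym; [apply Pr_le_1 | rewrite <- HP; apply Pr_mono; auto].
Qed.

Lemma Pr_compl_null A : meas A -> Pr A = 1 -> Pr (fun w => ~ A w) = 0.
Proof.
  intros HA HP. pose proof (meas_caratheodory A HA (fun _ => True)) as H. cbv beta in H.
  rewrite (Pr_ext (fun w => True /\ A w) A), (Pr_ext (fun w => True /\ ~ A w) (fun w => ~ A w)),
    Pr_full in H by tauto.
  pose proof (Pr_nonneg (fun w => ~ A w)). lra.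
Qed.

Definition misdetermined (k : nat) (w : Omega) : Prop := determined (prefix k w) (negb (f w)).

(* A point is misdetermined only if it lies in the null exceptional set of
   one of the finitely many prefixes of length [k]. *)
Lemma Pr_misdetermined k : Pr (misdetermined k) = 0.
Proof.
  set (N := fun c b w => determined c b /\ cyl c w /\ f w <> b).
  assert (HN : forall c b, Pr (N c b) = 0).
  { intros c b. destruct (classic (determined c b)) as [[A [HA1 [HA2 HA3]]]|Hg].
    - apply Rle_antisym; [|apply Pr_nonneg].
      rewrite <- (Pr_compl_null A HA1 HA2). apply Pr_mono.
      intros w [_ [Hc Hf]] HA. apply Hf; auto.
    - apply Pr_empty. intros w [Hg' _]. auto. }
  set (Y := fun j => match nth_error (bool_lists k) j with
                     | Some c => fun w => N c true w \/ N c false w | None => fun _ => False end).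
  apply Rle_antisym; [|apply Pr_nonneg].
  apply Rle_trans with (Pr (fun w => exists j, Y j w)).
  - apply Pr_mono. intros w Hz.
    destruct (In_nth_error _ _ (in_bool_lists k _ (prefix_length k w))) as [j Hj].
    exists j. unfold Y. rewrite Hj. unfold misdetermined in Hz.
    assert (Hc : cyl (prefix k w) w) by (apply cyl_prefix; auto).
    destruct (f w) eqn:Ef; simpl in Hz; [right|left]; unfold N; rewrite Ef;
      repeat split; auto; congruence.
  - apply Pr_countable_subadditive. intros N'. rewrite sum_f_R0_fsum.
    rewrite (fsum_ext _ (fun _ => 0)), fsum_const; [lra|]. intros j _.
    unfold Y. destruct (nth_error (bool_lists k) j) as [c|]; [|apply Pr_empty; auto].
    apply Rle_antisym; [|apply Pr_nonneg].
    eapply Rle_trans; [apply Pr_union_le | rewrite !HN; lra].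
Qed.

Lemma Inf_le_Pr_not_W_sub k : Inf k f <= Pr (fun w => ~ W_sub f w k).
Proof.
  unfold Inf.
  apply Rle_trans with (Pr (fun w => ~ W_sub f w k \/ misdetermined k (flip k w))).
  - apply Pr_mono. intros w Hw. destruct (classic (W_sub f w k)) as [H|H]; [right|left; auto].
    apply W_sub_determined in H. unfold misdetermined. rewrite prefix_flip by lia.
    destruct (f w), (f (flip k w)); simpl in *; tauto.
  - pose proof (Pr_union_le (fun w => ~ W_sub f w k) (fun w => misdetermined k (flip k w))).
    pose proof (Pr_flip_le k (misdetermined k)). rewrite Pr_misdetermined in *.
    pose proof (Pr_nonneg (fun w => misdetermined k (flip k w))). lra.
Qed.

(* For [n <= k], [B n f] is a.s. a function of the first [n] bits only. *)
Lemma Inf_B_high n k : (n <= k)%nat -> Inf k (B n f) = 0.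
Proof.
  intros Hnk. apply Rle_antisym; [|apply Pr_nonneg]. unfold Inf.
  apply Rle_trans with (Pr (fun w => misdetermined n w \/ misdetermined n (flip k w))).
  - apply Pr_mono. intros w Hw. unfold misdetermined. rewrite prefix_flip by auto.
    pose proof (W_sub_determined w n) as Hw1. pose proof (W_sub_determined (flip k w) n) as Hw2.
    rewrite prefix_flip in Hw2 by auto.
    destruct (classic (W_sub f w n)) as [Ha|Ha];
      destruct (classic (W_sub f (flip k w) n)) as [Hb|Hb];
      [rewrite (B_eq f n w Ha), (B_eq f n (flip k w) Hb) in Hw
      |rewrite (B_eq f n w Ha), (B_neq f n (flip k w) Hb) in Hw
      |rewrite (B_neq f n w Ha), (B_eq f n (flip k w) Hb) in Hw
      |rewrite (B_neq f n w Ha), (B_neq f n (flip k w) Hb) in Hw; congruence];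
      rewrite ?Hw1, ?Hw2 in *; destruct (f w), (f (flip k w)); simpl in *; tauto.
  - pose proof (Pr_union_le (misdetermined n) (fun w => misdetermined n (flip k w))).
    pose proof (Pr_flip_le k (misdetermined n)). rewrite Pr_misdetermined in *. lra.
Qed.

Lemma Pr_not_W_sub_cv0 : Un_cv (fun n => Pr (fun w => ~ W_sub f w n)) 0.
Proof.
  destruct f_finitary as [A [HAm [HAP HAw]]].
  apply (Pr_decreasing_cv0 _ (fun w => ~ A w)).
  - intros n. apply meas_caratheodory. constructor. apply meas_W_sub.
  - intros n w H Hn. apply H. eapply W_sub_mono; [|exact Hn]. lia.
  - intros w Hall HA. destruct (HAw w HA) as [W [[N HN] Hwit]]. apply (Hall N). exists W. auto.
  - apply Pr_compl_null; auto.
Qed.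

(* Off the null set where no finite witness exists, [W_sub f w k] fails
   exactly when [max W(f)(w) > k]. *)
Lemma Pr_not_W_sub_le_tail k L :
  (forall J, tail_part (fun m => Pr (fun w => maxW f w m)) k J <= L) ->
  Pr (fun w => ~ W_sub f w k) <= L.
Proof.
  intros HL. destruct f_finitary as [A [HAm [HAP HAw]]].
  set (Fam := fun j => match j with
                       | O => fun w => ~ A w
                       | S j' => fun w => maxW f w (S k + j')%nat end).
  apply Rle_trans with (Pr (fun w => exists j, Fam j w)).
  - apply Pr_mono. intros w Hw. destruct (classic (A w)) as [HA|HA]; [|exists O; exact HA].
    destruct (HAw w HA) as [W [[N HN] Hwit]].
    destruct (least_nat (W_sub f w) (ex_intro _ N (ex_intro _ W (conj HN Hwit))))
      as [m [Hm Hmin]].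
    assert (Hmk : (k < m)%nat).
    { destruct (Compare_dec.le_lt_dec m k); auto. exfalso. apply Hw. eapply W_sub_mono; eauto. }
    exists (S (m - S k)). simpl. replace (S (k + (m - S k)))%nat with m by lia.
    split; auto. intros n Hn. destruct (Compare_dec.le_lt_dec m n); auto.
    exfalso. eapply Hmin; eauto.
  - apply Pr_countable_subadditive. intros N. rewrite sum_f_R0_fsum.
    replace (S N) with (1 + N)%nat by lia. rewrite fsum_add. simpl fsum at 1.
    change (Pr (Fam O)) with (Pr (fun w => ~ A w)). rewrite Pr_compl_null by auto.
    specialize (HL N). unfold tail_part in HL. simpl in *. lra.
Qed.

Lemma Inf_B_cv k : Un_cv (fun n => Inf k (B n f)) (Inf k f).
Proof.
  intros eps Heps. destruct (Pr_not_W_sub_cv0 (eps / 2)) as [N HN]; [lra|].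
  exists N. intros n Hn. specialize (HN n Hn). unfold Rdist in *.
  rewrite Rminus_0_r, Rabs_pos_eq in HN by apply Pr_nonneg.
  pose proof (Rabs_Inf_B_sub_le f n k). lra.
Qed.

Definition Inf_bound k := 3 * Pr (fun w => ~ W_sub f w k).

Lemma Inf_bound_nonneg k : 0 <= Inf_bound k.
Proof. unfold Inf_bound. pose proof (Pr_nonneg (fun w => ~ W_sub f w k)). lra. Qed.

Lemma Inf_le_bound k : 0 <= Inf k f <= Inf_bound k.
Proof.
  split; [apply Pr_nonneg|]. pose proof (Inf_le_Pr_not_W_sub k).
  pose proof (Pr_nonneg (fun w => ~ W_sub f w k)). unfold Inf_bound. lra.
Qed.

Lemma Inf_B_le_bound n k : 0 <= Inf k (B n f) <= Inf_bound k.
Proof.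
  split; [apply Pr_nonneg|].
  destruct (Compare_dec.le_lt_dec n k) as [Hnk|Hnk].
  - rewrite Inf_B_high by auto. apply Inf_bound_nonneg.
  - pose proof (Inf_le_of_agree (B n f) f _ k (B_eq f n)).
    pose proof (Inf_le_Pr_not_W_sub k).
    assert (Pr (fun w => ~ W_sub f w n) <= Pr (fun w => ~ W_sub f w k)).
    { apply Pr_mono. intros w Hw Hk. apply Hw. eapply W_sub_mono; [|exact Hk]. lia. }
    unfold Inf_bound. lra.
Qed.

Lemma Pr_not_W_sub_le_tail_mass p (Hp : 0 <= p) l
  (Hl : infinite_sum (fun m => powp p m * Pr (fun w => maxW f w m)) l) k :
  Pr (fun w => ~ W_sub f w k) <= tail_mass _ p l (fun m => Pr_nonneg _) Hp Hl k.
Proof. apply Pr_not_W_sub_le_tail; auto. intros J. apply tail_part_le_tail_mass. Qed.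

Lemma Inf_bound_summable p : p > 1 -> knowable p f -> exists G, infinite_sum Inf_bound G.
Proof.
  intros Hp [_ [l Hl]]. assert (Hp0 : 0 <= p) by lra.
  apply (summable_of_bounded _ (3 * l)); [apply Inf_bound_nonneg|]. intros K.
  eapply Rle_trans with (3 * fsum (tail_mass _ p l (fun m => Pr_nonneg _) Hp0 Hl) K).
  - rewrite <- fsum_scal. apply fsum_le. intros k _. unfold Inf_bound.
    pose proof (Pr_not_W_sub_le_tail_mass p Hp0 l Hl k). lra.
  - pose proof (tail_mass_sum_le _ p l (fun m => Pr_nonneg _) Hp0 Hl ltac:(lra) K). lra.
Qed.

Lemma Inf_bound_sq_summable p :
  p > 1/2 -> knowable p f -> exists G, infinite_sum (fun k => Inf_bound k * Inf_bound k) G.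
Proof.
  intros Hp [_ [l Hl]]. assert (Hp0 : 0 <= p) by lra.
  apply (summable_of_bounded _ (9 * (l * l))); [intros k; pose proof (Inf_bound_nonneg k); nra|].
  intros K.
  set (T := tail_mass _ p l (fun m => Pr_nonneg _) Hp0 Hl).
  eapply Rle_trans with (9 * fsum (fun k => T k * T k) K).
  - rewrite <- fsum_scal. apply fsum_le. intros k _. unfold Inf_bound.
    pose proof (Pr_not_W_sub_le_tail_mass p Hp0 l Hl k).
    pose proof (Pr_nonneg (fun w => ~ W_sub f w k)). unfold T. nra.
  - pose proof (tail_mass_sq_sum_le _ p l (fun m => Pr_nonneg _) Hp0 Hl ltac:(lra) K).
    unfold T. lra.
Qed.

End Boolean_function.

Theorem mainTheorem13 (f : Omega -> bool)
  (Hmeas : measurable_fun f) (Hfin : finitary f) :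
  (forall k : nat, Un_cv (fun n => Inf k (B n f)) (Inf k f)) /\
  ((exists p, p > 1/2 /\ knowable p f) ->
     exists Hf, infinite_sum (fun k => (Inf k f) ^ 2) Hf /\
     exists Hn : nat -> R,
       (forall n, infinite_sum (fun k => (Inf k (B n f)) ^ 2) (Hn n)) /\
       Un_cv Hn Hf) /\
  ((exists p, p > 1 /\ knowable p f) ->
     exists If, infinite_sum (fun k => Inf k f) If /\
     exists In : nat -> R,
       (forall n, infinite_sum (fun k => Inf k (B n f)) (In n)) /\
       Un_cv In If).
Proof.
  pose proof (Inf_B_cv f Hmeas Hfin) as Hcv.
  pose proof (Inf_le_bound f Hfin) as Hf_le. pose proof (Inf_B_le_bound f Hfin) as HB_le.
  split; [exact Hcv | split].
  - intros [p [Hp Hk]]. destruct (Inf_bound_sq_summable f Hfin p Hp Hk) as [G HG].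
    apply (series_dominated_cv _ _ (fun k => Inf_bound f k * Inf_bound f k) G); [| | exact HG |].
    + intros n k. specialize (HB_le n k). simpl. nra.
    + intros k. specialize (Hf_le k). simpl. nra.
    + intros k. replace (Inf k f ^ 2) with (Inf k f * Inf k f) by ring.
      apply (Un_cv_ext (fun n => Inf k (B n f) * Inf k (B n f))); [intros; ring|].
      apply CV_mult; apply Hcv.
  - intros [p [Hp Hk]]. destruct (Inf_bound_summable f Hfin p Hp Hk) as [G HG].
    exact (series_dominated_cv _ _ _ G HB_le Hf_le HG Hcv).
Qed.
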